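(* Let $X=\mathbb{Q}$ with its usual ordering, let $\Gamma$ be the group of all order-preserving permutations of $\mathbb{Q}$ acting by application, and let $I$ be the ideal of nowhere dense subsets of $\mathbb{Q}$ (in the order topology). Then the dynamical ideal $\Gamma\curvearrowright X, I$ has cofinal orbits.
   Context: For a group $\Gamma$ acting on $X$ and a $\Gamma$-invariant ideal $I$ on $X$ containing all singletons, and $a\subseteq X$, $\mathrm{pstab}(a)=\{\gamma\in\Gamma:\gamma\cdot x=x\ \forall x\in a\}$. For $a,b\in I$, $b$ is $a$-large if for every $c\in I$ there is $\gamma\in\mathrm{pstab}(a)$ with $c\subseteq\gamma\cdot b$, where $\gamma\cdot b=\{\gamma\cdot x:x\in b\}$. The dynamical ideal has cofinal orbits if for every $a\in I$ there is an $a$-large $b\in I$. *)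

From mathcomp Require Import all_boot all_order all_algebra.
Set Implicit Arguments. Unset Strict Implicit. Unset Printing Implicit Defensive.
Import Order.TTheory GRing.Theory Num.Theory.
Local Open Scope ring_scope.

Definition qset := rat -> Prop.

(* Order topology on Q: generated by the open intervals (p,q)
   (rays add nothing since Q has no endpoints). *)
Definition order_open (U : qset) : Prop :=
  forall x, U x -> exists p q : rat, p < x < q /\ (forall y, p < y < q -> U y).

Definition order_closure (A : qset) : qset :=
  fun x => forall U, order_open U -> U x -> exists y, U y /\ A y.

Definition nowhere_dense (A : qset) : Prop :=
  forall U, order_open U -> (forall x, U x -> order_closure A x) ->
    forall x, ~ U x.

Definition order_perm (g : rat -> rat) : Prop :=
  bijective g /\ {mono g : x y / x <= y}.

Definition pstab (a : qset) (g : rat -> rat) : Prop :=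
  order_perm g /\ (forall x, a x -> g x = x).

Definition act_image (g : rat -> rat) (b : qset) : qset :=
  fun y => exists x, b x /\ y = g x.

Definition subq (A B : qset) : Prop := forall x, A x -> B x.

Definition a_large (a b : qset) : Prop :=
  forall c, nowhere_dense c -> exists g, pstab a g /\ subq c (act_image g b).

Definition cofinal_orbits : Prop :=
  forall a, nowhere_dense a -> exists b, nowhere_dense b /\ a_large a b.

From mathcomp Require Import all_boot all_order all_algebra.
From mathcomp Require Import ring lra zify.
From Stdlib Require Import Classical ClassicalEpsilon Wf_nat.
Set Implicit Arguments. Unset Strict Implicit. Unset Printing Implicit Defensive.
Import Order.TTheory GRing.Theory Num.Theory.
Local Open Scope ring_scope.

(* Let A be the closure of a. Every point outside A lies in a coarsest 4-adic cell whose
   closure misses A; placing a scaled copy of a nowhere dense, dense-in-itself Cantor set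
   in the middle of each such cell and adding A gives a nowhere dense set b without
   one-sided isolated points, such that each point outside A has points of b on both sides
   that are not separated from it by A. Given a nowhere dense c, a back-and-forth
   construction over finite partial isomorphisms respecting the cuts of A and carrying
   points, one-sided accumulation points and gaps of c to those of b builds an
   automorphism k fixing A with k(c) included in b; then g = k^-1 works. *)

(** * Nowhere dense sets of rationals *)

Definition between (S : qset) (x y : rat) := exists w, [/\ S w, x < w & w < y].

Definition right_limit (S : qset) (x : rat) := forall e, 0 < e -> between S x (x + e).
Definition left_limit (S : qset) (x : rat) := forall e, 0 < e -> between S (x - e) x.

Definition order_closed (S : qset) :=
  forall x, ~ S x -> exists l r, [/\ l < x, x < r & ~ between S l r].

Definition itv_nowhere_dense (S : qset) :=
  forall p q, p < q -> exists r s, [/\ p <= r, r < s, s <= q & ~ between S r s].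

Lemma betweenW (S : qset) x y x' y' :
  x' <= x -> y <= y' -> between S x y -> between S x' y'.
Proof.
move=> x'x yy' [w [Sw xw wy]]; exists w; split=> //.
- exact: le_lt_trans x'x xw.
- exact: lt_le_trans wy yy'.
Qed.

Lemma between_sub (S T : qset) x y : (forall z, S z -> T z) -> between S x y -> between T x y.
Proof. by move=> ST [w [Sw xw wy]]; exists w; split=> //; apply: ST. Qed.

Lemma not_right_limit (S : qset) x :
  ~ right_limit S x -> exists e, 0 < e /\ ~ between S x (x + e).
Proof. by move=> nr; apply: NNPP => H; apply: nr => e e0; apply: NNPP => ?; apply: H; exists e. Qed.

Lemma not_left_limit (S : qset) x :
  ~ left_limit S x -> exists e, 0 < e /\ ~ between S (x - e) x.
Proof. by move=> nl; apply: NNPP => H; apply: nl => e e0; apply: NNPP => ?; apply: H; exists e. Qed.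

Lemma right_limit_between (S : qset) x y : right_limit S x -> x < y -> between S x y.
Proof. by move=> rl xy; have := rl (y - x); rewrite subr_gt0 addrC subrK; apply. Qed.

Lemma left_limit_between (S : qset) x y : left_limit S y -> x < y -> between S x y.
Proof. by move=> ll xy; have := ll (y - x); rewrite subr_gt0 opprB addrC subrK; apply. Qed.

Lemma itv_nowhere_dense_avoid (S : qset) p q :
  itv_nowhere_dense S -> p < q -> exists x, [/\ p < x, x < q, ~ S x,
    ~ right_limit S x & ~ left_limit S x].
Proof.
move=> ndS pq; have [r [s [pr rs sq nS]]] := ndS p q pq.
exists ((r + s) / 2); split; [lra | lra | | |].
- by move=> Sx; apply: nS; exists ((r + s) / 2); split=> //; lra.
- move=> /right_limit_between rl; apply: nS.
  by apply: betweenW (rl s _) => //; lra.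
- move=> /left_limit_between ll; apply: nS.
  by apply: betweenW (ll r _) => //; lra.
Qed.

Lemma itv_nowhere_dense_sub (S T : qset) :
  (forall z, S z -> T z) -> itv_nowhere_dense T -> itv_nowhere_dense S.
Proof.
move=> ST ndT p q pq; have [r [s [pr rs sq nT]]] := ndT p q pq.
by exists r, s; split=> // /(between_sub ST).
Qed.

Lemma itv_open (p q : rat) : order_open (fun y => p < y < q).
Proof. by move=> x hx; exists p, q; split. Qed.

Lemma closure_sub (S : qset) x : S x -> order_closure S x.
Proof. by move=> Sx U _ Ux; exists x. Qed.

Lemma order_closed_closure (S : qset) : order_closed (order_closure S).
Proof.
move=> x ncl.
have [U [oU Ux nS]] : exists U, [/\ order_open U, U x & ~ exists y, U y /\ S y].
  by apply: NNPP => H; apply: ncl => U oU Ux; apply: NNPP => ?; apply: H; exists U.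
have [p [q [/andP [px xq] sU]]] := oU x Ux.
exists p, q; split=> // -[z [clz pz zq]].
have [|y [/andP [py yq] Sy]] := clz _ (@itv_open p q); first by rewrite pz zq.
by apply: nS; exists y; split=> //; apply: sU; rewrite py yq.
Qed.

Lemma itv_nowhere_dense_closure (S : qset) :
  nowhere_dense S -> itv_nowhere_dense (order_closure S).
Proof.
move=> ndS p q pq.
have [x [px xq nclx]] : exists x, [/\ p < x, x < q & ~ order_closure S x].
  apply: NNPP => H; apply: (ndS _ (@itv_open p q)) ((p + q) / 2) _; last first.
    by apply/andP; split; lra.
  by move=> y /andP [py yq]; apply: NNPP => ncl; apply: H; exists y.
have [l [r [lx xr nS]]] := order_closed_closure nclx.
exists (Order.max p l), (Order.min q r); split.
- by rewrite le_max lexx.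
- by rewrite lt_min !gt_max; apply/andP; split; apply/andP; split; lra.
- by rewrite ge_min lexx.
- by apply: contra_not nS; apply: betweenW; rewrite ?le_max ?ge_min lexx ?orbT.
Qed.

Lemma nowhere_dense_itv (S : qset) : itv_nowhere_dense S -> nowhere_dense S.
Proof.
move=> ndS U oU sub x Ux.
have [p [q [/andP [px xq] sU]]] := oU x Ux.
have [r [s [pr rs sq nS]]] := ndS p q (lt_trans px xq).
have /sub clm : U ((r + s) / 2) by apply: sU; apply/andP; split; lra.
have [|y [/andP [ry ys] Sy]] := clm _ (@itv_open r s); first by apply/andP; split; lra.
by apply: nS; exists y.
Qed.

Section Cuts.
Variable A : qset.

Definition same_cut (x y : rat) :=
  forall z, A z -> ((z < x) = (z < y)) /\ ((x < z) = (y < z)).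

Lemma same_cut_refl x : same_cut x x. Proof. by []. Qed.

Lemma same_cut_sym x y : same_cut x y -> same_cut y x.
Proof. by move=> h z /h [-> ->]. Qed.

Lemma same_cut_trans x y w : same_cut x y -> same_cut y w -> same_cut x w.
Proof. by move=> h1 h2 z Az; case: (h1 z Az) => -> ->; apply: h2. Qed.

Lemma same_cut_free p q : p <= q -> ~ (exists z, [/\ A z, p <= z & z <= q]) ->
  same_cut p q.
Proof.
move=> pq nA z Az; case: (ltP z p) => zp.
  have zq := lt_le_trans zp pq.
  by rewrite zq !ltNge (ltW zp) (ltW zq).
case: (ltP q z) => qz; last by case: nA; exists z.
have pz := le_lt_trans pq qz.
by rewrite pz ltNge (ltW qz).
Qed.

Lemma same_cut_convex lo x hi : lo <= x -> x <= hi -> same_cut lo hi -> same_cut lo x.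
Proof.
move=> lox xhi e z Az; case: (e z Az) => h1 h2; split; apply/idP/idP => H.
- exact: lt_le_trans H lox.
- by rewrite h1; apply: lt_le_trans H xhi.
- by move: H; rewrite h2 => /(le_lt_trans xhi).
- exact: le_lt_trans lox H.
Qed.

Lemma same_cut_between lo hi x y : lo <= x -> x <= hi ->
  same_cut lo y -> same_cut hi y -> same_cut x y.
Proof.
move=> lox xhi elo ehi.
have elohi := same_cut_trans elo (same_cut_sym ehi).
exact: same_cut_trans (same_cut_sym (same_cut_convex lox xhi elohi)) elo.
Qed.

Lemma same_cut_mem x y : A x -> same_cut x y -> x = y.
Proof.
move=> Ax /(_ x Ax); rewrite ltxx => -[h1 h2].
by apply/eqP; rewrite eq_le !leNgt -h1 -h2.
Qed.

Lemma same_cut_notin x y : same_cut x y -> ~ A x -> ~ A y.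
Proof. by move=> e nAx Ay; apply: nAx; rewrite -(same_cut_mem Ay (same_cut_sym e)). Qed.

Lemma same_cut_lt x x' y y' : x < x' -> ~ same_cut x x' ->
  same_cut x y -> same_cut x' y' -> y < y'.
Proof.
move=> xx' nx ex ex'; apply: contra_notT nx; rewrite -leNgt => y'y z Az.
case: (ex z Az) (ex' z Az) => [h1 h2] [h3 h4]; split; apply/idP/idP => H.
- exact: lt_trans H xx'.
- by rewrite h1; apply: lt_le_trans y'y; rewrite -h3.
- by rewrite h4; apply: le_lt_trans y'y _; rewrite -h2.
- exact: lt_trans xx' H.
Qed.
End Cuts.

(** * Back and forth *)

Lemma seq_argmax (T : eqType) d (R : orderType d) (f : T -> R) (P : pred T) (s : seq T) :
  has P s -> exists m, [/\ m \in s, P m & forall r, r \in s -> P r -> (f r <= f m)%O].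
Proof.
elim: s => [//|a s IH] /=; case: (boolP (has P s)) => [/IH [m [ms Pm mmax]] _ | nPs].
  case: (boolP (P a && (f m < f a)%O)) => [/andP [Pa lt] | nlt].
  - exists a; split; rewrite ?inE ?eqxx // => r; rewrite inE => /orP [/eqP -> //|rs Pr].
    exact: le_trans (mmax r rs Pr) (ltW lt).
  - exists m; split; rewrite ?inE ?ms ?orbT // => r; rewrite inE => /orP [/eqP -> Pa|].
      by move: nlt; rewrite Pa /= -leNgt.
    exact: mmax.
rewrite orbF => Pa; exists a; split; rewrite ?inE ?eqxx // => r.
rewrite inE => /orP [/eqP -> //|rs Pr].
by move/hasPn: nPs => /(_ r rs); rewrite Pr.
Qed.

Lemma seq_argmin (T : eqType) d (R : orderType d) (f : T -> R) (P : pred T) (s : seq T) :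
  has P s -> exists m, [/\ m \in s, P m & forall r, r \in s -> P r -> (f m <= f r)%O].
Proof. exact: (@seq_argmax T _ R^d). Qed.

Lemma lt_agree (a b c d : rat) : a != c -> (a < c -> b < d) -> (c < a -> d < b) ->
  ((c < a) = (d < b)) /\ ((a < c) = (b < d)).
Proof.
move=> ac lo hi; case: (ltgtP a c) => h; last by rewrite h eqxx in ac.
- by rewrite (lo h) [d < b]ltNge ltW ?lo.
- by rewrite (hi h) [b < d]ltNge ltW ?hi.
Qed.

Definition nearest_below (f : rat * rat -> rat) (s : seq (rat * rat)) x q :=
  [/\ q \in s, f q < x & forall r, r \in s -> f r < x -> f r <= f q].
Definition nearest_above (f : rat * rat -> rat) (s : seq (rat * rat)) x q :=
  [/\ q \in s, x < f q & forall r, r \in s -> x < f r -> f q <= f r].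

Lemma nearest_belowP f s x :
  (forall q, q \in s -> ~ f q < x) \/ exists q, nearest_below f s x q.
Proof.
case: (boolP (has (fun q => f q < x) s)) => [/(seq_argmax f) [q [qs qx qm]] | /hasPn nb].
  by right; exists q; split.
by left=> q /nb /negP.
Qed.

Lemma nearest_aboveP f s x :
  (forall q, q \in s -> ~ x < f q) \/ exists q, nearest_above f s x q.
Proof.
case: (boolP (has (fun q => x < f q) s)) => [/(seq_argmin f) [q [qs qx qm]] | /hasPn nb].
  by right; exists q; split.
by left=> q /nb /negP.
Qed.

Section BackAndForthLimit.
Variable adm : seq (rat * rat) -> Prop.
Hypothesis adm_nil : adm [::].
Hypothesis adm_lt : forall s, adm s -> forall p q, p \in s -> q \in s -> (p.1 < q.1) = (p.2 < q.2).
Hypothesis adm_forth : forall s x, adm s -> exists y, adm ((x, y) :: s).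
Hypothesis adm_back : forall s y, adm s -> exists x, adm ((x, y) :: s).

Definition rat_enum (n : nat) : rat := odflt 0 (unpickle n).

Definition forth_step (s : {s | adm s}) (x : rat) : {s | adm s} :=
  exist adm _ (svalP (constructive_indefinite_description _ (adm_forth x (svalP s)))).

Definition back_step (s : {s | adm s}) (y : rat) : {s | adm s} :=
  exist adm _ (svalP (constructive_indefinite_description _ (adm_back y (svalP s)))).

Fixpoint chain (n : nat) : {s | adm s} :=
  if n is m.+1 then back_step (forth_step (chain m) (rat_enum m)) (rat_enum m)
  else exist _ [::] adm_nil.

Lemma chain_succ n : exists x y,
  sval (chain n.+1) = (x, rat_enum n) :: (rat_enum n, y) :: sval (chain n).
Proof. by do 2 eexists. Qed.

Lemma chain_mono n m : (n <= m)%N -> {subset sval (chain n) <= sval (chain m)}.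
Proof.
elim: m => [|m IH]; first by rewrite leqn0 => /eqP ->.
rewrite leq_eqVlt => /orP [/eqP -> // | /IH sub p /sub pin].
by have [x [y ->]] := chain_succ m; rewrite !inE pin !orbT.
Qed.

Definition chain_graph x y := exists n, (x, y) \in sval (chain n).

Lemma chain_graph_lt x y x' y' : chain_graph x y -> chain_graph x' y' -> (x < x') = (y < y').
Proof.
move=> [n h] [m h']; have sub := chain_mono (leq_maxl n m); have sub' := chain_mono (leq_maxr n m).
exact: (adm_lt (svalP (chain (maxn n m))) (sub _ h) (sub' _ h')).
Qed.

Lemma chain_graph_eq x y x' y' : chain_graph x y -> chain_graph x' y' -> (x == x') = (y == y').
Proof.
move=> g g'; rewrite !eq_le !leNgt (chain_graph_lt g g') (chain_graph_lt g' g) //.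
Qed.

Lemma chain_graph_total x : exists y, chain_graph x y.
Proof.
have [x' [y h]] := chain_succ (pickle x).
by exists y, (pickle x).+1; rewrite h /rat_enum pickleK !inE eqxx orbT.
Qed.

Lemma chain_graph_onto y : exists x, chain_graph x y.
Proof.
have [x [y' h]] := chain_succ (pickle y).
by exists x, (pickle y).+1; rewrite h /rat_enum pickleK !inE eqxx.
Qed.

Lemma back_and_forth : exists f : rat -> rat,
  [/\ bijective f, {mono f : x y / x <= y} & forall x, exists s, adm s /\ (x, f x) \in s].
Proof.
pose f x := sval (constructive_indefinite_description _ (chain_graph_total x)).
pose f' y := sval (constructive_indefinite_description _ (chain_graph_onto y)).
have gf x : chain_graph x (f x) by rewrite /f; case: constructive_indefinite_description.
have gf' y : chain_graph (f' y) y by rewrite /f'; case: constructive_indefinite_description.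
exists f; split.
- exists f' => [x | y]; apply/eqP.
  + by rewrite (chain_graph_eq (gf' (f x)) (gf x)).
  + by rewrite -(chain_graph_eq (gf (f' y)) (gf' y)).
- by move=> x y; rewrite !leNgt (chain_graph_lt (gf y) (gf x)).
- by move=> x; have [n h] := gf x; exists (sval (chain n)); split=> //; apply: svalP.
Qed.
End BackAndForthLimit.

Section Admissible.
Variables A b C : qset.

(* Finite partial isomorphisms [x |-> y], listed as pairs. Besides the order and the cuts
   of [A], they carry membership in, one-sided accumulation at, and gaps of [C] to those
   of [b]; these are exactly the invariants that keep them extendable. *)
Record admissible (s : seq (rat * rat)) : Prop := Admissible {
  adm_lt : forall p q, p \in s -> q \in s -> (p.1 < q.1) = (p.2 < q.2);
  adm_cut : forall p, p \in s -> same_cut A p.1 p.2;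
  adm_mem : forall p, p \in s -> C p.1 -> b p.2;
  adm_right_limit : forall p, p \in s -> right_limit C p.1 -> right_limit b p.2;
  adm_left_limit : forall p, p \in s -> left_limit C p.1 -> left_limit b p.2;
  adm_between : forall p q, p \in s -> q \in s -> p.1 < q.1 ->
    between C p.1 q.1 -> between b p.2 q.2 }.

Lemma admissible_nil : admissible [::].
Proof. by []. Qed.

Lemma admissible_sub s s' : admissible s -> {subset s' <= s} -> admissible s'.
Proof.
case=> h1 h2 h3 h4 h5 h6 sub; split.
- by move=> p q /sub pin /sub qin; apply: h1.
- by move=> p /sub; apply: h2.
- by move=> p /sub; apply: h3.
- by move=> p /sub; apply: h4.
- by move=> p /sub; apply: h5.
- by move=> p q /sub pin /sub qin; apply: h6.
Qed.

Lemma admissible_dup s p : admissible s -> p \in s -> admissible (p :: s).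
Proof. by move=> adm ps; apply: admissible_sub adm _ => r; rewrite inE => /orP [/eqP -> |]. Qed.

Lemma admissible_le s p q : admissible s -> p \in s -> q \in s ->
  (p.1 <= q.1) = (p.2 <= q.2).
Proof. by move=> adm pin qin; rewrite !leNgt (adm_lt adm qin pin). Qed.

Lemma admissible_cons s x y : admissible s ->
  (forall q, q \in s -> ((x < q.1) = (y < q.2)) /\ ((q.1 < x) = (q.2 < y))) ->
  same_cut A x y -> (C x -> b y) ->
  (right_limit C x -> right_limit b y) -> (left_limit C x -> left_limit b y) ->
  (forall q, q \in s -> q.1 < x -> between C q.1 x -> between b q.2 y) ->
  (forall q, q \in s -> x < q.1 -> between C x q.1 -> between b y q.2) ->
  admissible ((x, y) :: s).
Proof.
move=> adm o e c r l g1 g2; split.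
- move=> p q; rewrite !inE => /orP [/eqP -> |pin] /orP [/eqP -> |qin] /=.
  + by rewrite !ltxx.
  + by case: (o q qin).
  + by case: (o p pin).
  + exact: (adm_lt adm).
- by move=> p; rewrite inE => /orP [/eqP -> //|]; apply: (adm_cut adm).
- by move=> p; rewrite inE => /orP [/eqP -> //|]; apply: (adm_mem adm).
- by move=> p; rewrite inE => /orP [/eqP -> //|]; apply: (adm_right_limit adm).
- by move=> p; rewrite inE => /orP [/eqP -> //|]; apply: (adm_left_limit adm).
- move=> p q; rewrite !inE => /orP [/eqP -> |pin] /orP [/eqP -> |qin] /=.
  + by rewrite ltxx.
  + exact: g2.
  + exact: g1.
  + exact: (adm_between adm).
Qed.

Lemma admissible_between_le s p q z : admissible s -> p \in s -> q \in s ->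
  C z -> p.1 < z -> z <= q.1 -> exists w, [/\ b w, p.2 < w & w <= q.2].
Proof.
move=> adm pin qin Cz pz; rewrite le_eqVlt => /orP [/eqP zq | zq].
  exists q.2; split=> //; first by apply: (adm_mem adm qin); rewrite -zq.
  by rewrite -(adm_lt adm pin qin) -zq.
have [w [bw pw wq]] := adm_between adm pin qin (lt_trans pz zq) (ex_intro _ z (And3 Cz pz zq)).
by exists w; split=> //; apply: ltW.
Qed.

Lemma admissible_between_ge s p q z : admissible s -> p \in s -> q \in s ->
  C z -> p.1 <= z -> z < q.1 -> exists w, [/\ b w, p.2 <= w & w < q.2].
Proof.
move=> adm pin qin Cz; rewrite le_eqVlt => /orP [/eqP pz | pz] zq.
  exists p.2; split=> //; first by apply: (adm_mem adm pin); rewrite pz.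
  by rewrite -(adm_lt adm pin qin) pz.
have [w [bw pw wq]] := adm_between adm pin qin (lt_trans pz zq) (ex_intro _ z (And3 Cz pz zq)).
by exists w; split=> //; apply: ltW.
Qed.

Hypothesis A_sub_b : forall x, A x -> b x.
Hypothesis b_right_limit : forall x, b x -> right_limit b x.
Hypothesis b_left_limit : forall x, b x -> left_limit b x.
Hypothesis b_below : forall u, ~ A u -> exists w, [/\ b w, w < u & same_cut A w u].
Hypothesis b_above : forall u, ~ A u -> exists w, [/\ b w, u < w & same_cut A u w].

Definition maps_below (s : seq (rat * rat)) x y := forall q, q \in s -> q.1 < x -> q.2 < y.
Definition maps_above (s : seq (rat * rat)) x y := forall q, q \in s -> x < q.1 -> y < q.2.

Lemma extend_in_b s x y : admissible s -> (forall q, q \in s -> q.1 != x) ->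
  same_cut A x y -> b y -> maps_below s x y -> maps_above s x y ->
  admissible ((x, y) :: s).
Proof.
move=> adm nx e By lo hi; apply: admissible_cons => //.
- by move=> q qs; apply: lt_agree; [apply: nx | apply: lo | apply: hi].
- by move=> _; apply: b_right_limit.
- by move=> _; apply: b_left_limit.
- by move=> q qs qx _; apply: left_limit_between (b_left_limit By) (lo q qs qx).
- by move=> q qs xq _; apply: right_limit_between (b_right_limit By) (hi q qs xq).
Qed.

Lemma extend_fixed s x : admissible s -> A x -> (forall q, q \in s -> q.1 != x) ->
  admissible ((x, x) :: s).
Proof.
move=> adm Ax nx; apply: extend_in_b => //; first exact: A_sub_b.
- by move=> q qs; case: (adm_cut adm qs Ax) => _ <-.
- by move=> q qs; case: (adm_cut adm qs Ax) => <-.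
Qed.

Lemma extend_in_gap s x y ql qh : admissible s -> (forall q, q \in s -> q.1 != x) ->
  nearest_below fst s x ql -> nearest_above fst s x qh -> ~ between b ql.2 qh.2 ->
  same_cut A x y -> ql.2 < y -> y < qh.2 -> admissible ((x, y) :: s).
Proof.
move=> adm nx [qls qlx qlm] [qhs xqh qhm] nb e qly yqh.
have nC : ~ between C ql.1 qh.1 by move/(adm_between adm qls qhs (lt_trans qlx xqh)).
have lo : maps_below s x y.
  by move=> q qs qx; apply: le_lt_trans qly; rewrite -(admissible_le adm qs qls); apply: qlm.
have hi : maps_above s x y.
  by move=> q qs xq; apply: lt_le_trans yqh _; rewrite -(admissible_le adm qhs qs); apply: qhm.
apply: admissible_cons => //.
- by move=> q qs; apply: lt_agree; [apply: nx | apply: lo | apply: hi].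
- by move=> Cx; case: nC; exists x.
- by move=> rl; case: nC; apply: betweenW (right_limit_between rl xqh) => //; apply: ltW.
- by move=> ll; case: nC; apply: betweenW (left_limit_between ll qlx) => //; apply: ltW.
- move=> q qs qx [z [Cz qz zx]].
  have zql : z <= ql.1.
    by rewrite leNgt; apply/negP => qlz; apply: nC; exists z; split=> //; apply: lt_trans xqh.
  have [w [bw qw wql]] := admissible_between_le adm qs qls Cz qz zql.
  by exists w; split=> //; apply: le_lt_trans qly.
- move=> q qs xq [z [Cz xz zq]].
  have qhz : qh.1 <= z.
    by rewrite leNgt; apply/negP => zqh; apply: nC; exists z; split=> //; apply: lt_trans qlx xz.
  have [w [bw qhw wq]] := admissible_between_ge adm qhs qs Cz qhz zq.
  by exists w; split=> //; apply: lt_le_trans yqh qhw.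
Qed.

Lemma forth_below s x : admissible s ->
  (forall y, same_cut A x y -> maps_below s x y) \/
  exists ql, nearest_below fst s x ql /\ same_cut A ql.1 x.
Proof.
move=> adm; case: (nearest_belowP fst s x) => [none | [ql [qls qlx qlm]]].
  by left=> y _ q qs qx; case: (none q qs qx).
case: (classic (same_cut A ql.1 x)) => e; first by right; exists ql.
left=> y exy q qs qx; apply: le_lt_trans (_ : ql.2 < y).
  by rewrite -(admissible_le adm qs qls); apply: qlm.
exact: same_cut_lt qlx e (adm_cut adm qls) exy.
Qed.

Lemma forth_above s x : admissible s ->
  (forall y, same_cut A x y -> maps_above s x y) \/
  exists qh, nearest_above fst s x qh /\ same_cut A x qh.1.
Proof.
move=> adm; case: (nearest_aboveP fst s x) => [none | [qh [qhs xqh qhm]]].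
  by left=> y _ q qs xq; case: (none q qs xq).
case: (classic (same_cut A x qh.1)) => e; first by right; exists qh.
left=> y exy q qs xq; apply: lt_le_trans (_ : y < qh.2) _.
  exact: same_cut_lt xqh e exy (adm_cut adm qhs).
by rewrite -(admissible_le adm qhs qs); apply: qhm.
Qed.

Lemma forth s x : admissible s -> exists y, admissible ((x, y) :: s).
Proof.
move=> adm; case: (boolP (has (fun q => q.1 == x) s)) => [/hasP [q qs /eqP <-] | /hasPn nx].
  by exists q.2; rewrite -surjective_pairing; apply: admissible_dup.
have {}nx q : q \in s -> q.1 != x by move/nx.
case: (classic (A x)) => Ax; first by exists x; apply: extend_fixed.
case: (forth_below x adm) => [lo | [ql [[qls qlx qlm] eql]]];
  case: (forth_above x adm) => [hi | [qh [[qhs xqh qhm] eqh]]].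
- have [w [bw xw e]] := b_above Ax.
  by exists w; apply: extend_in_b => //; [apply: lo | apply: hi].
- have exqh : same_cut A x qh.2 := same_cut_trans eqh (adm_cut adm qhs).
  have [w [bw wqh e]] := b_below (same_cut_notin exqh Ax).
  have exw := same_cut_trans exqh (same_cut_sym e).
  exists w; apply: extend_in_b => //; first exact: lo.
  by move=> q qs xq; apply: lt_le_trans wqh _; rewrite -(admissible_le adm qhs qs); apply: qhm.
- have exql : same_cut A x ql.2 := same_cut_trans (same_cut_sym eql) (adm_cut adm qls).
  have [w [bw qlw e]] := b_above (same_cut_notin exql Ax).
  have exw := same_cut_trans exql e.
  exists w; apply: extend_in_b => //; last exact: hi.
  by move=> q qs qx; apply: le_lt_trans qlw; rewrite -(admissible_le adm qs qls); apply: qlm.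
- have eql2 : same_cut A ql.2 x := same_cut_trans (same_cut_sym (adm_cut adm qls)) eql.
  have eqh2 : same_cut A qh.2 x := same_cut_sym (same_cut_trans eqh (adm_cut adm qhs)).
  case: (classic (between b ql.2 qh.2)) => [[w [bw qlw wqh]] | nb].
    have ewx : same_cut A w x := same_cut_between (ltW qlw) (ltW wqh) eql2 eqh2.
    exists w; apply: extend_in_b => //; first exact: same_cut_sym.
    + by move=> q qs qx; apply: le_lt_trans qlw; rewrite -(admissible_le adm qs qls); apply: qlm.
    + by move=> q qs xq; apply: lt_le_trans wqh _; rewrite -(admissible_le adm qhs qs); apply: qhm.
  have qlqh : ql.2 < qh.2 by rewrite -(adm_lt adm qls qhs); apply: lt_trans xqh.
  exists ((ql.2 + qh.2) / 2); apply: (extend_in_gap adm nx (ql := ql) (qh := qh)) => //; try lra.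
  by apply: same_cut_sym; apply: same_cut_between eql2 eqh2; lra.
Qed.

Hypothesis C_nd : itv_nowhere_dense C.

Definition back_below (s : seq (rat * rat)) y x :=
  (forall q, q \in s -> q.2 < y -> q.1 < x) /\
  (forall q, q \in s -> q.1 < x -> q.2 < y -> between C q.1 x -> between b q.2 y).
Definition back_above (s : seq (rat * rat)) y x :=
  (forall q, q \in s -> y < q.2 -> x < q.1) /\
  (forall q, q \in s -> x < q.1 -> y < q.2 -> between C x q.1 -> between b y q.2).

Lemma extend_off_C s x y : admissible s -> (forall q, q \in s -> q.2 != y) ->
  same_cut A x y -> back_below s y x -> back_above s y x ->
  ~ C x -> ~ right_limit C x -> ~ left_limit C x -> admissible ((x, y) :: s).
Proof.
move=> adm ny e [lo g1] [hi g2] nCx nr nl.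
have o q : q \in s -> ((x < q.1) = (y < q.2)) /\ ((q.1 < x) = (q.2 < y)).
  by move=> qs; have [-> ->] := lt_agree (ny q qs) (lo q qs) (hi q qs).
apply: admissible_cons => //.
- by move=> q qs qx; apply: g1 => //; rewrite -(o q qs).2.
- by move=> q qs xq; apply: g2 => //; rewrite -(o q qs).1.
Qed.

(* The new preimage is chosen off [C] and away from its accumulation points, which is
   possible inside any interval because [C] is nowhere dense. *)
Lemma extend_from_itv s y lo hi : admissible s -> (forall q, q \in s -> q.2 != y) ->
  lo < hi ->
  (forall x, lo < x -> x < hi -> [/\ same_cut A x y, back_below s y x & back_above s y x]) ->
  exists x, admissible ((x, y) :: s).
Proof.
move=> adm ny lohi ok; have [x [lox xhi nCx nr nl]] := itv_nowhere_dense_avoid C_nd lohi.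
by have [e lo' hi'] := ok x lox xhi; exists x; apply: extend_off_C.
Qed.

Lemma back_below_cases s y : admissible s -> ~ A y ->
  (forall x, same_cut A x y -> back_below s y x) \/
  exists ql, [/\ nearest_below snd s y ql, same_cut A ql.1 y &
    forall x, ql.1 < x -> between b ql.2 y \/ ~ between C ql.1 x -> back_below s y x].
Proof.
move=> adm nAy; case: (nearest_belowP snd s y) => [none | [ql [qls qly qlm]]].
  by left=> x _; split=> [q qs qy | q qs _ qy]; case: (none q qs qy).
have below q : q \in s -> q.2 < y -> q.1 <= ql.1.
  by move=> qs qy; rewrite (admissible_le adm qs qls); apply: qlm.
case: (classic (same_cut A ql.2 y)) => e; last first.
  left=> x exy; split=> [q qs qy | q qs _ qy _].
  - apply: le_lt_trans (below q qs qy) _.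
    exact: same_cut_lt qly e (same_cut_sym (adm_cut adm qls)) (same_cut_sym exy).
  - have [w [bw wy ewy]] := b_below nAy.
    have qlw : ql.2 < w := same_cut_lt qly e (same_cut_refl _) (same_cut_sym ewy).
    by exists w; split=> //; apply: le_lt_trans qlw; apply: qlm.
right; exists ql; split=> //; first exact: same_cut_trans (adm_cut adm qls) e.
move=> x qlx gap; split=> [q qs qy | q qs qx qy [z [Cz qz zx]]].
  exact: le_lt_trans (below q qs qy) qlx.
case: gap => [gb | nC]; first by apply: betweenW gb => //; apply: qlm.
have zql : z <= ql.1 by rewrite leNgt; apply/negP => qlz; apply: nC; exists z.
have [w [bw qw wql]] := admissible_between_le adm qs qls Cz qz zql.
by exists w; split=> //; apply: le_lt_trans qly.
Qed.

Lemma back_above_cases s y : admissible s -> ~ A y ->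
  (forall x, same_cut A x y -> back_above s y x) \/
  exists qh, [/\ nearest_above snd s y qh, same_cut A qh.1 y &
    forall x, x < qh.1 -> between b y qh.2 \/ ~ between C x qh.1 -> back_above s y x].
Proof.
move=> adm nAy; case: (nearest_aboveP snd s y) => [none | [qh [qhs yqh qhm]]].
  by left=> x _; split=> [q qs yq | q qs _ yq]; case: (none q qs yq).
have above q : q \in s -> y < q.2 -> qh.1 <= q.1.
  by move=> qs yq; rewrite (admissible_le adm qhs qs); apply: qhm.
case: (classic (same_cut A y qh.2)) => e; last first.
  left=> x exy; split=> [q qs yq | q qs _ yq _].
  - apply: lt_le_trans (above q qs yq).
    exact: same_cut_lt yqh e (same_cut_sym exy) (same_cut_sym (adm_cut adm qhs)).
  - have [w [bw yw eyw]] := b_above nAy.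
    have wqh : w < qh.2 := same_cut_lt yqh e eyw (same_cut_refl _).
    by exists w; split=> //; apply: lt_le_trans wqh _; apply: qhm.
right; exists qh; split=> //; first exact: same_cut_trans (adm_cut adm qhs) (same_cut_sym e).
move=> x xqh gap; split=> [q qs yq | q qs xq yq [z [Cz xz zq]]].
  exact: lt_le_trans xqh (above q qs yq).
case: gap => [gb | nC]; first by apply: betweenW gb => //; apply: qhm.
have qhz : qh.1 <= z by rewrite leNgt; apply/negP => zqh; apply: nC; exists z.
have [w [bw qhw wq]] := admissible_between_ge adm qhs qs Cz qhz zq.
by exists w; split=> //; apply: lt_le_trans yqh qhw.
Qed.

Lemma back_below_near s y ql : admissible s -> ql \in s -> ql.2 < y ->
  (forall x, ql.1 < x -> between b ql.2 y \/ ~ between C ql.1 x -> back_below s y x) ->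
  exists e, 0 < e /\ forall x, ql.1 < x -> x < ql.1 + e -> back_below s y x.
Proof.
move=> adm qls qly ok; case: (classic (between b ql.2 y)) => [gb | ngb].
  by exists 1; split=> [|x qlx _]; [exact: ltr01 | apply: ok => //; left].
have [e [e0 nC]] : exists e, 0 < e /\ ~ between C ql.1 (ql.1 + e).
  apply: not_right_limit => rl; apply: ngb.
  exact: right_limit_between (adm_right_limit adm qls rl) qly.
exists e; split=> // x qlx xe; apply: ok => //; right.
by apply: contra_not nC; apply: betweenW => //; apply: ltW.
Qed.

Lemma back_above_near s y qh : admissible s -> qh \in s -> y < qh.2 ->
  (forall x, x < qh.1 -> between b y qh.2 \/ ~ between C x qh.1 -> back_above s y x) ->
  exists e, 0 < e /\ forall x, qh.1 - e < x -> x < qh.1 -> back_above s y x.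
Proof.
move=> adm qhs yqh ok; case: (classic (between b y qh.2)) => [gb | ngb].
  by exists 1; split=> [|x _ xqh]; [exact: ltr01 | apply: ok => //; left].
have [e [e0 nC]] : exists e, 0 < e /\ ~ between C (qh.1 - e) qh.1.
  apply: not_left_limit => ll; apply: ngb.
  exact: left_limit_between (adm_left_limit adm qhs ll) yqh.
exists e; split=> // x ex xqh; apply: ok => //; right.
by apply: contra_not nC; apply: betweenW => //; apply: ltW.
Qed.

Lemma back_two_sided s y ql qh : admissible s -> (forall q, q \in s -> q.2 != y) ->
  ql \in s -> qh \in s -> ql.2 < y -> y < qh.2 ->
  same_cut A ql.1 y -> same_cut A qh.1 y ->
  (forall x, ql.1 < x -> between b ql.2 y \/ ~ between C ql.1 x -> back_below s y x) ->
  (forall x, x < qh.1 -> between b y qh.2 \/ ~ between C x qh.1 -> back_above s y x) ->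
  exists x, admissible ((x, y) :: s).
Proof.
move=> adm ny qls qhs qly yqh eql eqh lo hi.
have qlqh : ql.1 < qh.1 by rewrite (adm_lt adm qls qhs); apply: lt_trans yqh.
have exy x : ql.1 < x -> x < qh.1 -> same_cut A x y.
  by move=> qlx xqh; apply: same_cut_between eql eqh; apply: ltW.
case: (classic (between b ql.2 y)) => [gl | ngl].
  have [e [e0 hi']] := back_above_near adm qhs yqh hi.
  have lt : Order.max ql.1 (qh.1 - e) < qh.1 by rewrite gt_max qlqh /=; lra.
  apply: (extend_from_itv adm ny lt) => x; rewrite gt_max => /andP [qlx ex] xqh.
  by split; [apply: exy | apply: lo => //; left | apply: hi'].
case: (classic (between b y qh.2)) => [gh | ngh].
  have [e [e0 lo']] := back_below_near adm qls qly lo.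
  have lt : ql.1 < Order.min qh.1 (ql.1 + e) by rewrite lt_min qlqh /=; lra.
  apply: (extend_from_itv adm ny lt) => x qlx; rewrite lt_min => /andP [xqh xe].
  by split; [apply: exy | apply: lo' | apply: hi => //; left].
have nC : ~ between C ql.1 qh.1.
  move/(adm_between adm qls qhs qlqh) => [w [bw qlw wqh]].
  case: (ltgtP w y) => [wy | yw | wy].
  - by apply: ngl; exists w.
  - by apply: ngh; exists w.
  - by apply: ngh; apply: right_limit_between yqh; apply: b_right_limit; rewrite -wy.
apply: (extend_from_itv adm ny qlqh) => x qlx xqh.
have [nCl nCh] : ~ between C ql.1 x /\ ~ between C x qh.1.
  by split; apply: contra_not nC; apply: betweenW => //; apply: ltW.
by split; [apply: exy | apply: lo => //; right | apply: hi => //; right].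
Qed.

Lemma back s y : admissible s -> exists x, admissible ((x, y) :: s).
Proof.
move=> adm; case: (boolP (has (fun q => q.2 == y) s)) => [/hasP [q qs /eqP <-] | /hasPn ny].
  by exists q.1; rewrite -surjective_pairing; apply: admissible_dup.
have {}ny q : q \in s -> q.2 != y by move/ny.
case: (classic (A y)) => Ay.
  exists y; apply: extend_fixed => // q qs; apply: contraNneq (ny q qs) => qy.
  have Aq : A q.1 by rewrite qy.
  by rewrite -(same_cut_mem Aq (adm_cut adm qs)) qy.
case: (back_below_cases adm Ay) => [lo | [ql [[qls qly qlm] eql lo]]];
  case: (back_above_cases adm Ay) => [hi | [qh [[qhs yqh qhm] eqh hi]]].
- have [w [_ yw eyw]] := b_above Ay.
  apply: (extend_from_itv adm ny yw) => x yx xw.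
  have exy := same_cut_between (ltW yx) (ltW xw) (same_cut_refl y) (same_cut_sym eyw).
  by split=> //; [apply: lo | apply: hi].
- have [e [e0 hi']] := back_above_near adm qhs yqh hi.
  have [w [_ wqh ew]] := b_below (same_cut_notin (same_cut_sym eqh) Ay).
  have lt : Order.max w (qh.1 - e) < qh.1 by rewrite gt_max wqh /=; lra.
  apply: (extend_from_itv adm ny lt) => x; rewrite gt_max => /andP [wx ex] xqh.
  have exy := same_cut_between (ltW wx) (ltW xqh) (same_cut_trans ew eqh) eqh.
  by split=> //; [apply: lo | apply: hi'].
- have [e [e0 lo']] := back_below_near adm qls qly lo.
  have [w [_ qlw ew]] := b_above (same_cut_notin (same_cut_sym eql) Ay).
  have lt : ql.1 < Order.min w (ql.1 + e) by rewrite lt_min qlw /=; lra.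
  apply: (extend_from_itv adm ny lt) => x qlx; rewrite lt_min => /andP [xw xe].
  have exy := same_cut_between (ltW qlx) (ltW xw) eql (same_cut_trans (same_cut_sym ew) eql).
  by split=> //; [apply: lo' | apply: hi].
exact: back_two_sided adm ny qls qhs qly yqh eql eqh lo hi.
Qed.

Theorem admissible_automorphism : exists g : rat -> rat,
  [/\ order_perm g, forall x, A x -> g x = x & forall x, C x -> act_image g b x].
Proof.
have [f [[g fg gf] mono_f graph]] :=
  back_and_forth admissible_nil (fun s adm => adm_lt adm) forth back.
exists g; split; first by split; [exists f | apply: can_mono gf mono_f].
- move=> x Ax; have [s [adm xs]] := graph x.
  by rewrite {1}(same_cut_mem Ax (adm_cut adm xs)) fg.
- move=> x Cx; have [s [adm xs]] := graph x.
  by exists (f x); rewrite fg; split=> //; apply: (adm_mem adm xs).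
Qed.
End Admissible.

(** * A Cantor set *)

Lemma pow4_gt0 n : 0 < 4 ^+ n :> rat.
Proof. exact: exprn_gt0. Qed.

Lemma pow4_neq0 n : 4 ^+ n != 0 :> rat.
Proof. by rewrite gt_eqF ?pow4_gt0. Qed.

Lemma pow4_int n : (4 ^+ n : int)%:~R = 4 ^+ n :> rat.
Proof. by rewrite rmorphXn. Qed.

Lemma pow4_large (e : rat) m : 0 < e -> exists2 n, (m < n)%N & 1 < 4 ^+ n * e.
Proof.
move=> e0; have := archi_boundP (ltW (divr_gt0 ltr01 e0)).
set N := Num.Def.archi_bound _ => hN.
exists (maxn N m.+1); first by rewrite leq_max leqnn orbT.
have N4 : (N%:R : rat) < 4 ^+ (maxn N m.+1).
  rewrite -natrX ltr_nat; apply: leq_ltn_trans (ltn_expl _ _) => //.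
  exact: leq_maxl.
have Ne : 1 < N%:R * e by rewrite -ltr_pdivrMr // mul1r -div1r.
by apply: lt_trans Ne _; rewrite ltr_pM2r.
Qed.

(* [x = d_1/4 + ... + d_n/4^n] with digits [d_i] in [{-1, 0, 1}]; the missing digit [2]
   leaves a gap at every scale. *)
Fixpoint cantor_digits (n : nat) (x : rat) : Prop :=
  if n is m.+1 then
    exists y (d : int), [/\ cantor_digits m y, d = -1 \/ d = 0 \/ d = 1 & x = (d%:~R + y) / 4]
  else x = 0.

Definition cantor (x : rat) := exists n, cantor_digits n x.

Lemma cantor0 : cantor 0.
Proof. by exists 0%N. Qed.

Lemma digit_bound (d : int) : d = -1 \/ d = 0 \/ d = 1 -> -1 <= d%:~R :> rat /\ d%:~R <= 1 :> rat.
Proof. by case=> [->|[->|->]]; rewrite ?intrN ?mulr1z ?mulr0z; split; lra. Qed.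

Lemma cantor_digits_bound n x : cantor_digits n x -> -(1/3) <= x /\ x <= 1/3.
Proof.
elim: n x => [x -> | n IH x [y [d [Ky /digit_bound [d1 d2] ->]]]]; first by split; lra.
by have [y1 y2] := IH y Ky; split; lra.
Qed.

Lemma cantor_bound x : cantor x -> -(1/3) <= x /\ x <= 1/3.
Proof. by case=> n /cantor_digits_bound. Qed.

Lemma cantor_digits_near_int j n x : cantor_digits n x ->
  exists m : int, m%:~R - 1/3 <= 4 ^+ j * x /\ 4 ^+ j * x <= m%:~R + 1/3.
Proof.
elim: j n x => [|j IH] n x Kx.
  by exists 0; rewrite expr0 mul1r; have [h1 h2] := cantor_digits_bound Kx; split; lra.
case: n Kx => [-> | n [y [d [Ky hd ->]]]]; first by exists 0; rewrite mulr0; split; lra.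
have [m [h1 h2]] := IH _ _ Ky; exists (d * 4 ^+ j + m).
rewrite intrD intrM pow4_int.
have -> : 4 ^+ j.+1 * ((d%:~R + y) / 4) = d%:~R * 4 ^+ j + 4 ^+ j * y :> rat.
  by rewrite exprS; field.
by split; lra.
Qed.

Lemma cantor_itv_nowhere_dense : itv_nowhere_dense cantor.
Proof.
move=> p q pq; have e0 : 0 < (q - p) / 2 by lra.
have [j _ hj] := pow4_large 0 e0.
set t : rat := 4 ^+ j; have t0 : 0 < t := pow4_gt0 j.
have {}hj : 1 < t * ((q - p) / 2) := hj.
set m : int := Num.floor (t * p) + 1.
have := floor_itv (t * p); rewrite intrD => /andP [f1 f2].
have tpm : t * p < m%:~R by rewrite /m intrD.
have mtp : m%:~R <= t * p + 1 by rewrite /m intrD; lra.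
exists ((m%:~R + 1/3) / t), ((m%:~R + 2/3) / t); split.
- by rewrite ler_pdivlMr // [p * _]mulrC; lra.
- by rewrite ltr_pdivrMr // divfK ?gt_eqF //; lra.
- by rewrite ler_pdivrMr // [q * _]mulrC; lra.
move=> [z [[n Kz] h1 h2]].
rewrite ltr_pdivrMr // mulrC in h1; rewrite ltr_pdivlMr // mulrC in h2.
have [k [h3 h4]] := cantor_digits_near_int j Kz; rewrite -/t in h3 h4.
have a1 : k < m + 1 by rewrite -(ltr_int rat) intrD; lra.
have a2 : m < k by rewrite -(ltr_int rat); lra.
lia.
Qed.

Lemma cantor_digits_shift N n x (d : int) : (n < N)%N -> d = -1 \/ d = 1 ->
  cantor_digits n x -> cantor_digits N (x + d%:~R / 4 ^+ N).
Proof.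
move=> + hd; elim: N n x => [//|N IH] [|n] x; rewrite ltnS => nN.
  move=> ->; rewrite add0r; case: N IH nN => [_ _ | N IH _].
    by exists 0, d; split; [| tauto | rewrite expr1 addr0].
  have t0 := pow4_neq0 N.+1.
  exists (d%:~R / 4 ^+ N.+1), 0; split; first by have := IH 0%N 0 isT erefl; rewrite add0r.
    by right; left.
  by rewrite mulr0z add0r exprS; field.
move=> [y [d' [Ky hd' ->]]]; have t0 := pow4_neq0 N.
exists (y + d%:~R / 4 ^+ N), d'; split; [exact: IH nN Ky | done | by rewrite exprS; field].
Qed.

Lemma cantor_right_limit x : cantor x -> right_limit cantor x.
Proof.
move=> [n Kx] e e0; have [N nN hN] := pow4_large n e0; have t0 := pow4_gt0 N.
exists (x + 1 / 4 ^+ N); split.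
- by exists N; exact: (cantor_digits_shift (d := 1) nN (or_intror erefl) Kx).
- by rewrite ltrDl divr_gt0.
- by rewrite ltrD2l ltr_pdivrMr // mulrC.
Qed.

Lemma cantor_left_limit x : cantor x -> left_limit cantor x.
Proof.
move=> [n Kx] e e0; have [N nN hN] := pow4_large n e0; have t0 := pow4_gt0 N.
exists (x - 1 / 4 ^+ N); split.
- exists N; have := cantor_digits_shift (d := -1) nN (or_introl erefl) Kx.
  by rewrite intrN mulNr.
- by rewrite ltrD2l ltrN2 ltr_pdivrMr // mulrC.
- by rewrite gtrDl oppr_lt0 divr_gt0.
Qed.

(** * Whitney cells *)

Definition cell (n : nat) (x : rat) : int := Num.floor (4 ^+ n * x).
Definition cell_lo (n : nat) (x : rat) : rat := (cell n x)%:~R / 4 ^+ n.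
Definition cell_hi (n : nat) (x : rat) : rat := cell_lo n x + 1 / 4 ^+ n.

Lemma cell_lo_le n x : cell_lo n x <= x.
Proof. by rewrite /cell_lo ler_pdivrMr ?pow4_gt0 // mulrC floor_le. Qed.

Lemma lt_cell_hi n x : x < cell_hi n x.
Proof.
rewrite /cell_hi /cell_lo -mulrDl ltr_pdivlMr ?pow4_gt0 // mulrC.
by have := floorD1_gt (4 ^+ n * x); rewrite intrD.
Qed.

Lemma cell_lo_lt_hi n x : cell_lo n x < cell_hi n x.
Proof. by rewrite /cell_hi ltrDl divr_gt0 ?pow4_gt0. Qed.

Lemma cell_eq n x y : cell_lo n y <= x -> x < cell_hi n y -> cell n x = cell n y.
Proof.
rewrite /cell_hi /cell_lo -mulrDl ler_pdivrMr ?ltr_pdivlMr ?pow4_gt0 // ![x * _]mulrC.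
by move=> h1 h2; apply: floor_def; rewrite h1 intrD.
Qed.

Lemma cell_lt n n' x y : (n <= n')%N -> cell n x < cell n y -> cell n' x < cell n' y.
Proof.
rewrite /cell => nn' xy; set k := Num.floor (4 ^+ n * y) in xy.
have xk : 4 ^+ n * x < k%:~R by rewrite -floor_lt_int.
have ky : k%:~R <= 4 ^+ n * y := floor_le _.
have c0 : 0 < 4 ^+ (n' - n) :> rat := pow4_gt0 _.
have split_pow : 4 ^+ n' = 4 ^+ (n' - n) * 4 ^+ n :> rat by rewrite -exprD subnK.
apply: (@lt_le_trans _ _ (4 ^+ (n' - n) * k : int)).
  by rewrite floor_lt_int intrM pow4_int split_pow -mulrA ltr_pM2l.
by rewrite floor_ge_int intrM pow4_int split_pow -mulrA ler_pM2l.
Qed.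

Lemma cell_coarsen n n' x y : (n <= n')%N -> cell n' x = cell n' y -> cell n x = cell n y.
Proof.
move=> nn' e; case: (ltgtP (cell n x) (cell n y)) => // /(cell_lt nn').
  by rewrite e ltxx.
by rewrite e ltxx.
Qed.

(* Affine coordinates in which the cell of [x] at level [n] is [[-1/2, 1/2)]. *)
Definition cell_point n x c := cell_lo n x + (1/2 + c) / 4 ^+ n.
Definition cell_coord n x z := 4 ^+ n * (z - cell_lo n x) - 1/2.

Lemma cell_pointK n x z : cell_point n x (cell_coord n x z) = z.
Proof. by rewrite /cell_point /cell_coord; move: (pow4_neq0 n) => ?; field. Qed.

Lemma cell_coordK n x c : cell_coord n x (cell_point n x c) = c.
Proof. by rewrite /cell_point /cell_coord; move: (pow4_neq0 n) => ?; field. Qed.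

Lemma ltr_cell_point n x : {mono cell_point n x : a b / a < b}.
Proof. by move=> a b; rewrite ltrD2l ltr_pM2r ?invr_gt0 ?pow4_gt0 // ltrD2l. Qed.

Lemma ler_cell_point n x : {mono cell_point n x : a b / a <= b}.
Proof. by move=> a b; rewrite lerD2l ler_pM2r ?invr_gt0 ?pow4_gt0 // lerD2l. Qed.

Lemma cell_cantor_point n x r : cantor r -> cell n (cell_point n x r) = cell n x.
Proof.
move=> /cantor_bound [r1 r2]; have t0 := pow4_gt0 n.
apply: cell_eq; rewrite /cell_point /cell_hi.
- by rewrite lerDl divr_ge0 //; lra.
- by rewrite ltrD2l ltr_pM2r ?invr_gt0 //; lra.
Qed.

Lemma cell_lo_cantor_point n x r : cantor r -> cell_lo n (cell_point n x r) = cell_lo n x.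
Proof. by move=> Kr; rewrite /cell_lo cell_cantor_point. Qed.

Section WhitneyCells.
Variable A : qset.

Definition free_cell n x := ~ exists z, [/\ A z, cell_lo n x <= z & z <= cell_hi n x].

Definition whitney_level n x := free_cell n x /\ forall j, (j < n)%N -> ~ free_cell j x.

Lemma free_cell_eq n x y : cell n x = cell n y -> free_cell n x -> free_cell n y.
Proof. by rewrite /free_cell /cell_hi /cell_lo => ->. Qed.

Lemma whitney_level_eq n x y : cell n x = cell n y -> whitney_level n x -> whitney_level n y.
Proof.
move=> e [fx mx]; split; first exact: free_cell_eq fx.
move=> j jn /free_cell_eq fy; apply: (mx j jn); apply: fy.
exact: cell_coarsen (ltnW jn) (esym e).
Qed.

Lemma whitney_level_unique n n' x : whitney_level n x -> whitney_level n' x -> n = n'.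
Proof.
move=> [f m] [f' m']; case: (ltngtP n n') => // h.
- by case: (m' n h f).
- by case: (m n' h f').
Qed.

Lemma whitney_level_cell n n' x y z : whitney_level n x -> whitney_level n' y ->
  cell n z = cell n x -> cell n' z = cell n' y -> n = n' /\ cell n x = cell n y.
Proof.
wlog nn' : n n' x y / (n <= n')%N => [hw wx wy ex ey | wx wy ex ey].
  case: (leqP n n') => [/hw | /ltnW /hw h]; first exact.
  by case: (h y x wy wx ey ex) => -> ->.
have exy : cell n x = cell n y by rewrite -ex; apply: cell_coarsen nn' ey.
by split=> //; apply: whitney_level_unique wy; apply: whitney_level_eq wx.
Qed.

Lemma whitney_cells_disjoint n n' x y : whitney_level n x -> whitney_level n' y ->
  [\/ n = n' /\ cell n x = cell n y, cell_hi n x <= cell_lo n' y | cell_hi n' y <= cell_lo n x].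
Proof.
move=> wx wy; case: (leP (cell_hi n x) (cell_lo n' y)) => h1; first by constructor 2.
case: (leP (cell_hi n' y) (cell_lo n x)) => h2; first by constructor 3.
constructor 1; pose z := Order.max (cell_lo n x) (cell_lo n' y).
have [lo lo'] : cell_lo n x <= z /\ cell_lo n' y <= z by rewrite !le_max !lexx orbT.
have [hi hi'] : z < cell_hi n x /\ z < cell_hi n' y.
  by rewrite !gt_max !cell_lo_lt_hi h1 h2.
exact: whitney_level_cell wx wy (cell_eq lo hi) (cell_eq lo' hi').
Qed.

Hypothesis A_closed : order_closed A.

Lemma whitney_level_ex x : ~ A x -> exists n, whitney_level n x.
Proof.
move=> nAx; have [l [r [lx xr nA]]] := A_closed nAx.
have e0 : 0 < Order.min (x - l) (r - x) by rewrite lt_min !subr_gt0 lx xr.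
have [N _ hN] := pow4_large 0 e0; have t0 := pow4_gt0 N.
have small : 1 / 4 ^+ N < Order.min (x - l) (r - x) by rewrite ltr_pdivrMr // mulrC.
move: small; rewrite lt_min => /andP [sl sr].
have fN : free_cell N x.
  move=> [z [Az lz zh]]; apply: nA; exists z; split=> //.
  - by have := lt_cell_hi N x; move: zh; rewrite /cell_hi; lra.
  - by have := cell_lo_le N x; move: lz zh; rewrite /cell_hi; lra.
have [n [[fn least] _]] := @dec_inh_nat_subset_has_unique_least_element
  (free_cell^~ x) (fun n => classic _) (ex_intro _ N fN).
by exists n; split=> // j jn /least /ssrnat.leP; rewrite leqNgt jn.
Qed.

(* A copy of the Cantor set, scaled into the middle of every Whitney cell. *)
Definition whitney_cantor x := exists n, whitney_level n x /\ cantor (cell_coord n x x).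

Lemma whitney_cantor_point n x r : whitney_level n x -> cantor r ->
  whitney_cantor (cell_point n x r).
Proof.
move=> wx Kr; exists n; split; first exact: whitney_level_eq (esym (cell_cantor_point n x Kr)) wx.
by rewrite /cell_coord cell_lo_cantor_point // -/(cell_coord n x _) cell_coordK.
Qed.

Definition cantor_fill x := A x \/ whitney_cantor x.

(* The Whitney cell of a point just left of the cell of [u], chosen in the [A]-free
   neighbourhood of its left endpoint, lies entirely to the left; its centre works. *)
Lemma cantor_fill_below u : ~ A u ->
  exists w, [/\ cantor_fill w, w < u & same_cut A w u].
Proof.
move=> nAu; have [n wu] := whitney_level_ex nAu.
have nAl : ~ A (cell_lo n u).
  by move=> Al; apply: wu.1; exists (cell_lo n u); rewrite lexx ltW ?cell_lo_lt_hi.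
have [l1 [r1 [l1l lr1 nA1]]] := A_closed nAl.
pose v := (l1 + cell_lo n u) / 2.
have nAv : ~ A v by move=> Av; apply: nA1; exists v; split=> //; rewrite /v; lra.
have [n' wv] := whitney_level_ex nAv.
have hl := cell_lo_lt_hi n u; have ul := cell_lo_le n u; have vh := lt_cell_hi n' v.
have [l1v vl] : l1 < v /\ v < cell_lo n u by rewrite /v; split; lra.
have hv_l : cell_hi n' v <= cell_lo n u.
  case: (whitney_cells_disjoint wv wu) => [[nn' e] | // | h].
    by subst n'; have := cell_lo_le n v; rewrite /cell_lo e -/(cell_lo n u); lra.
  by have := cell_lo_le n' v; lra.
pose w := cell_point n' v 0.
have lo_w : cell_lo n' v <= w by rewrite -(cell_lo_cantor_point n' v cantor0) cell_lo_le.
have w_hi : w < cell_hi n' v.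
  by rewrite /cell_hi -(cell_lo_cantor_point n' v cantor0) lt_cell_hi.
exists w; split; [right; exact: whitney_cantor_point wv cantor0 | lra |].
apply: same_cut_free => [|[z [Az wz zu]]]; first lra.
case: (leP z (cell_hi n' v)) => [zh | hz].
  by apply: wv.1; exists z; split=> //; lra.
case: (ltP z (cell_lo n u)) => [zl | lz].
  by apply: nA1; exists z; split=> //; lra.
by apply: wu.1; exists z; split=> //; have := lt_cell_hi n u; lra.
Qed.

Lemma cantor_fill_above u : ~ A u ->
  exists w, [/\ cantor_fill w, u < w & same_cut A u w].
Proof.
move=> nAu; have [n wu] := whitney_level_ex nAu.
have nAh : ~ A (cell_hi n u).
  by move=> Ah; apply: wu.1; exists (cell_hi n u); rewrite lexx ltW ?cell_lo_lt_hi.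
have [l1 [r1 [l1h hr1 nA1]]] := A_closed nAh.
pose v := (cell_hi n u + r1) / 2.
have [hv vr1] : cell_hi n u < v /\ v < r1 by rewrite /v; split; lra.
have nAv : ~ A v by move=> Av; apply: nA1; exists v; split=> //; lra.
have [n' wv] := whitney_level_ex nAv.
have hl := cell_lo_lt_hi n u; have ul := cell_lo_le n u; have uh := lt_cell_hi n u.
have lv := cell_lo_le n' v; have vh := lt_cell_hi n' v.
have h_lv : cell_hi n u <= cell_lo n' v.
  case: (whitney_cells_disjoint wv wu) => [[nn' e] | h | //].
    by subst n'; move: vh; rewrite /cell_hi /cell_lo e -/(cell_lo n u) -/(cell_hi n u); lra.
  by lra.
pose w := cell_point n' v 0.
have lo_w : cell_lo n' v <= w by rewrite -(cell_lo_cantor_point n' v cantor0) cell_lo_le.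
have w_hi : w < cell_hi n' v.
  by rewrite /cell_hi -(cell_lo_cantor_point n' v cantor0) lt_cell_hi.
exists w; split; [right; exact: whitney_cantor_point wv cantor0 | lra |].
apply: same_cut_free => [|[z [Az uz zw]]]; first lra.
case: (leP z (cell_hi n u)) => [zh | hz].
  by apply: wu.1; exists z; split=> //; lra.
case: (ltP z (cell_lo n' v)) => [zl | lz].
  by apply: nA1; exists z; split=> //; lra.
by apply: wv.1; exists z; split=> //; lra.
Qed.

Lemma whitney_cantor_right_limit x : whitney_cantor x -> right_limit whitney_cantor x.
Proof.
move=> [n [wx Kx]] e e0; have t0 := pow4_gt0 n.
have [r [Kr xr re]] := cantor_right_limit Kx (mulr_gt0 t0 e0).
exists (cell_point n x r); split; first exact: whitney_cantor_point wx Kr.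
  by rewrite -{1}(cell_pointK n x x) ltr_cell_point.
rewrite -(cell_pointK n x (x + e)) ltr_cell_point /cell_coord.
by move: re; rewrite /cell_coord; lra.
Qed.

Lemma whitney_cantor_left_limit x : whitney_cantor x -> left_limit whitney_cantor x.
Proof.
move=> [n [wx Kx]] e e0; have t0 := pow4_gt0 n.
have [r [Kr rx xr]] := cantor_left_limit Kx (mulr_gt0 t0 e0).
exists (cell_point n x r); split; first exact: whitney_cantor_point wx Kr.
  rewrite -(cell_pointK n x (x - e)) ltr_cell_point /cell_coord.
  by move: rx; rewrite /cell_coord; lra.
by rewrite -{2}(cell_pointK n x x) ltr_cell_point.
Qed.

Hypothesis A_nd : itv_nowhere_dense A.

Lemma cantor_fill_right_limit x : cantor_fill x -> right_limit cantor_fill x.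
Proof.
case=> [Ax | /whitney_cantor_right_limit rl] e e0; last first.
  by have [w [bw xw we]] := rl e e0; exists w; split=> //; right.
have xe : x < x + e by lra.
have [r [s [xr rs se nA]]] := A_nd xe.
have nAu : ~ A ((r + s) / 2) by move=> Au; apply: nA; exists ((r + s) / 2); split=> //; lra.
have [w [bw wu e_wu]] := cantor_fill_below nAu.
have xw : x < w by case: (e_wu x Ax) => -> _; lra.
by exists w; split=> //; lra.
Qed.

Lemma cantor_fill_left_limit x : cantor_fill x -> left_limit cantor_fill x.
Proof.
case=> [Ax | /whitney_cantor_left_limit ll] e e0; last first.
  by have [w [bw ew wx]] := ll e e0; exists w; split=> //; right.
have ex : x - e < x by lra.
have [r [s [er rs sx nA]]] := A_nd ex.
have nAu : ~ A ((r + s) / 2) by move=> Au; apply: nA; exists ((r + s) / 2); split=> //; lra.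
have [w [bw uw e_uw]] := cantor_fill_above nAu.
have wx : w < x by case: (e_uw x Ax) => _ <-; lra.
by exists w; split=> //; lra.
Qed.

Lemma cantor_fill_itv_nowhere_dense : itv_nowhere_dense cantor_fill.
Proof.
move=> p q pq; have [r [s [pr rs sq nA]]] := A_nd pq.
pose y := (r + s) / 2; have e0 : 0 < (s - r) / 2 by lra.
have [M _ hM] := pow4_large 0 e0.
have small : 1 / 4 ^+ M < (s - r) / 2 by rewrite ltr_pdivrMr ?pow4_gt0 // mulrC.
have [r_lo hi_s] : r < cell_lo M y /\ cell_hi M y < s.
  by have := cell_lo_le M y; have := lt_cell_hi M y; rewrite /cell_hi /y; split; lra.
have fM : free_cell M y by move=> [z [Az lz zh]]; apply: nA; exists z; split=> //; lra.
have nAy : ~ A y by move=> Ay; apply: nA; exists y; split=> //; rewrite /y; lra.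
have [n wy] := whitney_level_ex nAy.
have nM : (n <= M)%N by rewrite leqNgt; apply/negP => Mn; apply: wy.2 Mn fM.
have in_cell z : cell_lo M y < z -> z < cell_hi M y ->
    whitney_level n z /\ cell_lo n z = cell_lo n y.
  move=> h1 h2; have e := cell_coarsen nM (cell_eq (ltW h1) h2).
  by split; [apply: whitney_level_eq (esym e) wy | rewrite /cell_lo e].
have lohi : cell_coord n y (cell_lo M y) < cell_coord n y (cell_hi M y).
  by rewrite -(ltr_cell_point n y) !cell_pointK cell_lo_lt_hi.
have [al [be [h1 alb h2 nK]]] := cantor_itv_nowhere_dense lohi.
rewrite -(ler_cell_point n y) cell_pointK in h1.
rewrite -(ler_cell_point n y) cell_pointK in h2.
exists (cell_point n y al), (cell_point n y be); split; [lra | by rewrite ltr_cell_point | lra |].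
move=> [z [[Az | [n' [wz Kz]]] az zb]]; first by apply: nA; exists z; split=> //; lra.
have [wz' lo_eq] := in_cell z (le_lt_trans h1 az) (lt_le_trans zb h2).
move: Kz; rewrite -(whitney_level_unique wz' wz) /cell_coord lo_eq -/(cell_coord n y z) => Kz.
apply: nK; exists (cell_coord n y z); split=> //.
- by rewrite -(ltr_cell_point n y) cell_pointK.
- by rewrite -(ltr_cell_point n y) cell_pointK.
Qed.
End WhitneyCells.

Theorem mainTheorem5 : cofinal_orbits.
Proof.
move=> a nd_a; pose A := order_closure a.
have A_closed : order_closed A := @order_closed_closure a.
have A_nd : itv_nowhere_dense A := itv_nowhere_dense_closure nd_a.
exists (cantor_fill A).
split; first exact: nowhere_dense_itv (cantor_fill_itv_nowhere_dense A_closed A_nd).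
move=> c nd_c.
have c_nd : itv_nowhere_dense c :=
  itv_nowhere_dense_sub (@closure_sub c) (itv_nowhere_dense_closure nd_c).
have [g [perm_g fix_g cover_g]] := admissible_automorphism (C := c)
  (fun x Ax => or_introl Ax) (cantor_fill_right_limit A_closed A_nd)
  (cantor_fill_left_limit A_closed A_nd) (cantor_fill_below A_closed)
  (cantor_fill_above A_closed) c_nd.
exists g; split; last exact: cover_g.
by split=> // x ax; apply: fix_g; apply: closure_sub.
Qed.
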